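(* Let $L=\mathcal{F}(P)$ be a finite distributive lattice and let $K$ be a cutting of $L$. Then for all $k$, $$d_k((L\boxplus K)\boxplus K)=d_k(L\boxplus K)+d_{k-2}(K)$$ and $$d_k^-(L\boxplus K)=d_k^-(L)+d_{k-1}^-(K).$$
   Context: For a finite poset $P$, $\mathcal{F}(P)$ is the set of filters (up-sets) of $P$ ordered by reverse inclusion; every finite distributive lattice is isomorphic to some $\mathcal{F}(P)$. A cutting of a finite distributive lattice $L$ is an interval $K=[\hat0_K,\hat1_K]$ of $L$ such that every maximal chain of $L$ meets $K$. For a cutting $K$ of $L=\mathcal{F}(P)$, let $S=\hat0_K\setminus\hat1_K$, $S_0$ the set of maximal elements of $P\setminus\hat0_K$, $S_1$ the set of minimal elements of $\hat1_K$. The poset $P_K$ is $P\cup\{x_K\}$ ($x_K$ new) where the order on $P$ is unchanged, $z<x_K$ iff $z\le s$ for some $s\in S_0$, $x_K<y$ iff $y\ge s$ for some $s\in S_1$, and $x_K$ is incomparable to every element of $S$; the convex expansion is $L\boxplus K:=\mathcal{F}(P_K)$. The lattice $(L\boxplus K)\boxplus K$ is the expansion of $L\boxplus K$ by the copy of $K$ in it, namely $\mathcal{F}(P')$ where $P'=P\cup\{x_1,x_2\}$ ($x_1,x_2$ new) with the order of $P$ unchanged, $x_1<x_2$, $z<x_1$ iff $z\le s$ for some $s\in S_0$, $x_2<y$ iff $y\ge s$ for some $s\in S_1$ (and then $z<x_2$, $x_1<y$ accordingly), and $x_1,x_2$ incomparable to every element of $S$. For a finite lattice $M$ and $a\in M$: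 $\deg^-_M(a)$ is the number of elements covering $a$, $\deg^+_M(a)$ the number of elements covered by $a$, $\deg_M(a)=\deg^-_M(a)+\deg^+_M(a)$; $d_k^-(M)$ (resp. $d_k(M)$) is the number of $a\in M$ with $\deg^-_M(a)=k$ (resp. $\deg_M(a)=k$), and these are $0$ for negative $k$. *)

From mathcomp Require Import all_boot all_order all_algebra.
Set Implicit Arguments. Unset Strict Implicit. Unset Printing Implicit Defensive.
Import GRing.Theory Num.Theory.

Section FinPoset.
Variables (X : finType) (S : {set X}) (r : rel X).

Definition covby (x y : X) : bool :=
  [&& x \in S, y \in S, r x y, x != y &
      [forall z in S, ~~ [&& r x z, r z y, z != x & z != y]]].

Definition deg_minus (x : X) : nat := #|[set y in S | covby x y]|.
Definition deg_plus (x : X) : nat := #|[set y in S | covby y x]|.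
Definition deg (x : X) : nat := deg_minus x + deg_plus x.

(* d_k^-(M) and d_k(M), indexed by integers (0 for negative k) *)
Definition dminus (k : int) : nat := #|[set x in S | Posz (deg_minus x) == k]|.
Definition dtot (k : int) : nat := #|[set x in S | Posz (deg x) == k]|.

Definition is_chain (C : {set X}) : bool :=
  (C \subset S) && [forall x in C, forall y in C, r x y || r y x].
Definition maximal_chain (C : {set X}) : bool :=
  is_chain C && [forall D : {set X}, is_chain D && (C \subset D) ==> (D == C)].

Definition lat_interval (lo hi : X) : {set X} := [set x in S | r lo x && r x hi].

Definition cutting (lo hi : X) : Prop :=
  [/\ lo \in S, hi \in S, r lo hi &
      forall C, maximal_chain C -> exists2 x, x \in C & x \in lat_interval lo hi].
End FinPoset.

Definition filters (T : finType) (le : rel T) : {set {set T}} :=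
  [set A : {set T} | [forall x in A, forall y, le x y ==> (y \in A)]].

Definition revincl (T : finType) : rel {set T} := fun A B => B \subset A.

Section Expansion.
Variables (T : finType) (le : rel T) (a b : {set T}).
(* a = 0_K, b = 1_K (as filters of P) *)

Definition S0 : {set T} :=
  [set s | (s \notin a) && [forall t, ((t \notin a) && le s t) ==> (t == s)]].
Definition S1 : {set T} :=
  [set s | (s \in b) && [forall t, ((t \in b) && le t s) ==> (t == s)]].

(* P_K = P + {x_K}, with x_K = None *)
Definition leK (u v : option T) : bool :=
  match u, v with
  | Some z, Some y => le z y
  | Some z, None => [exists s in S0, le z s]
  | None, Some y => [exists s in S1, le s y]
  | None, None => true
  end.

(* P' = P + {x1, x2}, with x1 = inr false, x2 = inr true *)
Definition leKK (u v : T + bool) : bool :=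
  match u, v with
  | inl z, inl y => le z y
  | inl z, inr _ => [exists s in S0, le z s]
  | inr _, inl y => [exists s in S1, le s y]
  | inr i, inr j => (~~ i) || j
  end.
End Expansion.

From mathcomp Require Import all_boot all_order all_algebra.
Set Implicit Arguments. Unset Strict Implicit. Unset Printing Implicit Defensive.

(* If z is outside the filter 0_K and y is in 1_K, then z <= y: otherwise a maximal
   chain of filters through the principal filter of z would meet K in a filter
   comparable with it, whereas the filters of K contain y and omit z.  Hence every
   filter of P contains 1_K or is contained in 0_K, and the filters of P_K are the
   filters of P contained in 0_K together with the F + x_K for F containing 1_K:
   L [+] K is L with the interval K doubled.  Covers in a lattice of filters remove
   exactly one element, so degrees count removable and addable elements.  Both copies
   inherit the degrees of L, except that x_K is removable from F + x_K exactly when F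
   is in K, which shifts d^- by one.  In P' the filters F + x_2 with F in K form a
   third copy of K whose elements gain two covers (remove x_2, add x_1), while the
   other two copies keep their degrees in L [+] K. *)

Section MaximalElements.
Variables (X : finType) (r : rel X).
Hypotheses (r_refl : reflexive r) (r_anti : antisymmetric r) (r_trans : transitive r).

Lemma exists_maximal_above (A : {set X}) x : x \in A ->
  exists m, [/\ m \in A, r x m & forall y, y \in A -> r m y -> y = m].
Proof.
move=> xA; pose below m := [set t | r t m].
have [|m /andP[mA xm] mmax] :=
  @arg_maxnP _ x (fun m => (m \in A) && r x m) (fun m => #|below m|).
  by rewrite xA r_refl.
exists m; split=> // y yA my.
have yP : (y \in A) && r x y by rewrite yA (r_trans xm my).
apply: contraTeq (mmax y yP) => ym.
rewrite -ltnNge; apply: proper_card; apply/properP; split.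
  by apply/subsetP => t; rewrite !inE => /r_trans; apply.
exists y; rewrite !inE ?r_refl //.
by apply: contra ym => ym'; apply/eqP/r_anti; rewrite ym' my.
Qed.

End MaximalElements.

Lemma exists_maximal_chain (X : finType) (S : {set X}) (r : rel X) C :
  is_chain S r C -> exists2 D, maximal_chain S r D & C \subset D.
Proof.
move=> Cch; have [|D /andP[Dch CD] Dmax] :=
  @arg_maxnP _ C (fun D => is_chain S r D && (C \subset D)) (fun D => #|D|).
  by rewrite Cch subxx.
exists D => //; rewrite /maximal_chain Dch.
apply/forallP => E; apply/implyP => /andP[Ech DE].
rewrite eq_sym eqEcard DE; apply: Dmax.
by rewrite Ech (subset_trans CD DE).
Qed.

Section FilterLattice.
Variables (X : finType) (r : rel X).

Lemma filtersP (A : {set X}) :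
  reflect (forall x y, x \in A -> r x y -> y \in A) (A \in filters r).
Proof.
rewrite inE; apply: (iffP forall_inP) => [Aup x y xA | Aup x xA].
  by move/forallP/(_ y)/implyP: (Aup x xA).
by apply/forallP => y; apply/implyP; apply: Aup.
Qed.

Lemma filters_up (A : {set X}) x y : A \in filters r -> x \in A -> r x y -> y \in A.
Proof. by move/filtersP; apply. Qed.

Hypotheses (r_refl : reflexive r) (r_anti : antisymmetric r) (r_trans : transitive r).

Lemma setU1_maximal_filters F G m :
  F \in filters r -> G \in filters r -> m \in F :\: G ->
  (forall y, y \in F :\: G -> r m y -> y = m) -> m |: G \in filters r.
Proof.
move=> FL GL /setDP[mF _] mmax; apply/filtersP => x y /setU1P[-> | xG] xy.
  apply/setU1P; case: (boolP (y \in G)) => yG; [by right | left].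
  by apply: mmax => //; rewrite inE yG (filters_up FL mF xy).
by rewrite inE (filters_up GL xG xy) orbT.
Qed.

Lemma covby_filters F G :
  covby (filters r) (@revincl X) F G =
  [&& F \in filters r, G \in filters r, G \subset F & #|F :\: G| == 1].
Proof.
rewrite /covby /revincl; case FL: (F \in filters r) => //=.
case GL: (G \in filters r) => //=; case GF: (G \subset F) => //=.
apply/andP/cards1P => [[neFG /forall_inP between] | [m eFG]].
  have /set0Pn[x xFG] : F :\: G != set0.
    by rewrite setD_eq0; apply: contra neFG => FG; rewrite eqEsubset FG GF.
  have [m [mFG _ mmax]] := exists_maximal_above r_refl r_anti r_trans xFG.
  have mG : m \notin G by case/setDP: mFG.
  have /between : m |: G \in filters r := setU1_maximal_filters FL GL mFG mmax.
  rewrite subUset sub1set (setDP mFG).1 GF subsetUr /= => /nandP[/negbNE/eqP <- |].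
    exists m; apply/setP => t; rewrite !inE.
    by case: (t =P m) => [-> | _]; rewrite ?mG ?andNb.
  by move/negbNE/eqP/setP/(_ m); rewrite setU11 (negbTE mG).
have [mG mF] : m \notin G /\ m \in F by apply/andP; rewrite -in_setD eFG set11.
have inFG t : t \in F -> t \notin G -> t = m.
  by move=> tF tG; apply/set1P; rewrite -eFG inE tF tG.
split; first by apply: contraNneq mG => <-.
apply/forall_inP => H _; apply/and4P => -[HF GH /eqP neHF /eqP neHG].
case: (boolP (m \in H)) => mH.
  apply: neHF; apply/eqP; rewrite eqEsubset HF; apply/subsetP => t tF.
  by case: (boolP (t \in G)) => [/(subsetP GH) | /(inFG t tF) ->].
apply: neHG; apply/eqP; rewrite eqEsubset GH andbT; apply/subsetP => t tH.
by apply: contraNT mH => tG; rewrite -(inFG t (subsetP HF t tH) tG).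
Qed.

End FilterLattice.

Lemma covby_interval (X : finType) (S : {set X}) (r : rel X) lo hi x y :
  transitive r ->
  covby (lat_interval S r lo hi) r x y =
  [&& x \in lat_interval S r lo hi, y \in lat_interval S r lo hi & covby S r x y].
Proof.
move=> r_trans; rewrite /covby.
case: (boolP (x \in _)) => //=; rewrite inE => /and3P[xS lox _].
case: (boolP (y \in _)) => //=; rewrite inE => /and3P[yS _ yhi].
rewrite xS yS; congr [&& _, _ & _]; apply/forall_inP/forall_inP => between z zS.
  apply/negP => /and4P[xz zy zx zy'].
  have zI : z \in lat_interval S r lo hi.
    by rewrite inE zS (r_trans _ _ _ lox xz) (r_trans _ _ _ zy yhi).
  by move/negP: (between z zI); apply; apply/and4P.
by apply: between; move: zS; rewrite inE => /andP[].
Qed.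

Lemma subset_card_setD1P (X : finType) (F G : {set X}) :
  reflect (exists2 m, m \in F & G = F :\ m) ((G \subset F) && (#|F :\: G| == 1)).
Proof.
apply: (iffP andP) => [[GF /cards1P[m eFG]] | [m mF ->]].
  have /setDP[mF mG] : m \in F :\: G by rewrite eFG set11.
  exists m => //; apply/setP => t; rewrite in_setD1.
  case: (t =P m) => [-> | /eqP tm] /=; first exact/negbTE.
  apply/idP/idP => [/(subsetP GF) // | tF].
  by apply: contraTT tm => tG; rewrite negbK -in_set1 -eFG inE tF tG.
split; first exact: subD1set.
apply/cards1P; exists m; apply/setP => t; rewrite !inE.
by case: (t =P m) => [-> | _]; rewrite ?mF ?andNb.
Qed.

Section CoverDegrees.
Variables (X : finType) (S : {set {set X}}).
Hypothesis covby_S : forall F G, covby S (@revincl X) F G =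
  [&& F \in S, G \in S, G \subset F & #|F :\: G| == 1].

Lemma deg_minus_removable F :
  F \in S -> deg_minus S (@revincl X) F = #|[set m in F | F :\ m \in S]|.
Proof.
move=> FS; rewrite /deg_minus -(@card_in_imset _ _ (fun m => F :\ m)); last first.
  move=> m1 m2; rewrite inE => /andP[m1F _] _ e12.
  by apply/eqP; move: (setD11 m1 F); rewrite e12 in_setD1 m1F andbT => /negbFE.
apply: eq_card => G; rewrite inE covby_S FS /=.
apply/idP/imsetP => [/and3P[GS _ /subset_card_setD1P[m mF eG]] | [m]].
  by exists m; rewrite // inE mF -eG.
rewrite inE => /andP[mF mS] ->; rewrite mS; apply/subset_card_setD1P.
by exists m.
Qed.

Lemma deg_plus_addable F :
  F \in S -> deg_plus S (@revincl X) F = #|[set m | m \notin F & m |: F \in S]|.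
Proof.
move=> FS; rewrite /deg_plus -(@card_in_imset _ _ (fun m => m |: F)); last first.
  move=> m1 m2; rewrite inE => /andP[m1F _] _ e12.
  by move: (setU11 m1 F); rewrite e12 => /setU1P[| m1F'] //; rewrite m1F' in m1F.
apply: eq_card => G; rewrite inE covby_S FS /=.
apply/idP/imsetP => [/and3P[GS _ /subset_card_setD1P[m mG eF]] | [m]].
  by exists m; rewrite ?inE eF ?setD11 ?setD1K //.
rewrite inE => /andP[mF mS] ->; rewrite mS; apply/subset_card_setD1P.
by exists m; rewrite ?setU11 ?setU1K.
Qed.

End CoverDegrees.

Section Cutting.
Variables (T : finType) (le : rel T).
Hypotheses (le_refl : reflexive le) (le_trans : transitive le).
Variables (a b : {set T}).

Lemma cutting_le : cutting (filters le) (@revincl T) a b ->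
  forall z y, z \notin a -> y \in b -> le z y.
Proof.
case=> _ _ _ meetK z y za yb; apply: contraT => nzy.
pose U := [set t | le z t].
have UL : U \in filters le.
  by apply/filtersP => t u; rewrite !inE => zt tu; apply: le_trans zt tu.
have Uchain : is_chain (filters le) (@revincl T) [set U].
  rewrite /is_chain sub1set UL; apply/forall_inP => _ /set1P->.
  by apply/forall_inP => _ /set1P->; rewrite /revincl subxx.
have [C Cmax /subsetP/(_ U (set11 U)) UC] := exists_maximal_chain Uchain.
have [x xC] := meetK C Cmax; rewrite inE => /and3P[_ xa bx].
have /orP[xU | Ux] : revincl U x || revincl x U.
  by case/andP: Cmax => /andP[_ /forall_inP/(_ U UC)/forall_inP/(_ x xC)].
  by move: (subsetP xU y (subsetP bx y yb)); rewrite inE (negbTE nzy).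
have zU : z \in U by rewrite inE le_refl.
by move: (subsetP xa z (subsetP Ux z zU)); rewrite (negbTE za).
Qed.

End Cutting.

Lemma card_set_sum (X : finType) (P : pred X) : #|[set x | P x]| = \sum_x P x.
Proof. by rewrite -sum1dep_card big_mkcond. Qed.

Lemma Posz_addn_eq (d m : nat) (k : int) :
  (Posz (d + m) == k) = (Posz d == k - Posz m)%R.
Proof. by rewrite [RHS]eq_sym GRing.subr_eq PoszD eq_sym. Qed.

Section ExtendedSets.
Variable T : finType.

Definition extK (F : {set T}) (xK : bool) : {set option T} :=
  [set u | if u is Some t then t \in F else xK].

Definition extKK (F : {set T}) (x1 x2 : bool) : {set T + bool} :=
  [set u | match u with inl t => t \in F | inr i => if i then x2 else x1 end].

Lemma setD1_extK F xK t : extK F xK :\ Some t = extK (F :\ t) xK.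
Proof. by apply/setP => -[u|]; rewrite !inE. Qed.
Lemma setU1_extK F xK t : Some t |: extK F xK = extK (t |: F) xK.
Proof. by apply/setP => -[u|]; rewrite !inE. Qed.
Lemma setD1_extK_xK F : extK F true :\ None = extK F false.
Proof. by apply/setP => -[u|]; rewrite !inE. Qed.
Lemma setU1_extK_xK F : None |: extK F false = extK F true.
Proof. by apply/setP => -[u|]; rewrite !inE. Qed.

Lemma setD1_extKK F x1 x2 t : extKK F x1 x2 :\ inl t = extKK (F :\ t) x1 x2.
Proof. by apply/setP => -[u|[]]; rewrite !inE. Qed.
Lemma setU1_extKK F x1 x2 t : inl t |: extKK F x1 x2 = extKK (t |: F) x1 x2.
Proof. by apply/setP => -[u|[]]; rewrite !inE. Qed.
Lemma setD1_extKK_x1 F x2 : extKK F true x2 :\ inr false = extKK F false x2.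
Proof. by apply/setP => -[u|[]]; rewrite !inE. Qed.
Lemma setD1_extKK_x2 F x1 : extKK F x1 true :\ inr true = extKK F x1 false.
Proof. by apply/setP => -[u|[]]; rewrite !inE. Qed.
Lemma setU1_extKK_x1 F x2 : inr false |: extKK F false x2 = extKK F true x2.
Proof. by apply/setP => -[u|[]]; rewrite !inE. Qed.
Lemma setU1_extKK_x2 F x1 : inr true |: extKK F x1 false = extKK F x1 true.
Proof. by apply/setP => -[u|[]]; rewrite !inE. Qed.

Lemma card_set_option (G : {set option T}) :
  #|G| = #|[set t | Some t \in G]| + (None \in G).
Proof.
rewrite (cardsD1 None) addnC; congr (_ + _).
have -> : G :\ None = Some @: [set t | Some t \in G].
  apply/setP => -[u|]; rewrite !inE /=; last by apply/esym/imsetP => -[].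
  by rewrite (mem_imset _ _ Some_inj) inE.
exact/card_imset/Some_inj.
Qed.

Lemma card_set_sumbool (G : {set T + bool}) :
  #|G| = #|[set t | inl t \in G]| + (inr false \in G) + (inr true \in G).
Proof.
have inl_inj : injective (@inl T bool) by move=> ? ? [].
rewrite (cardsD1 (inr false)) (cardsD1 (inr true)) !inE /=.
have -> : G :\ inr false :\ inr true = inl @: [set t | inl t \in G].
  apply/setP => -[u|[]]; rewrite !inE /=; try by apply/esym/imsetP => -[].
  by rewrite (mem_imset _ _ inl_inj) inE.
rewrite (card_imset _ inl_inj).
by rewrite addnA addnC addnA.
Qed.

Lemma card_pred_extK (P : pred {set option T}) :
  #|[set G | P G]| = \sum_(F : {set T}) (P (extK F true) + P (extK F false)).
Proof.
rewrite card_set_sum (reindex (fun Fx : {set T} * bool => extK Fx.1 Fx.2)) /=; last first.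
  exists (fun G : {set option T} => ([set t | Some t \in G], None \in G))
    => [[F xK] _ | G _].
    by congr pair; [apply/setP => t |]; rewrite !inE.
  by apply/setP => -[t|]; rewrite !inE.
rewrite -(pair_big xpredT xpredT (fun F xK => P (extK F xK) : nat)) /=.
by apply: eq_bigr => F _; rewrite big_bool.
Qed.

Lemma card_pred_extKK (P : pred {set T + bool}) :
  #|[set G | P G]| = \sum_(F : {set T})
    (P (extKK F true true) + P (extKK F true false) +
     (P (extKK F false true) + P (extKK F false false))).
Proof.
pose ext (Fx : {set T} * (bool * bool)) := extKK Fx.1 Fx.2.1 Fx.2.2.
rewrite card_set_sum (reindex ext) /=; last first.
  exists (fun G : {set T + bool} =>
            ([set t | inl t \in G], (inr false \in G, inr true \in G)))
    => [[F [x1 x2]] _ | G _].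
    by congr pair; [apply/setP => t |]; rewrite !inE.
  by apply/setP => -[t|[]]; rewrite !inE.
rewrite -(pair_big xpredT xpredT (fun F x => P (ext (F, x)) : nat)) /=.
apply: eq_bigr => F _.
rewrite -(pair_big xpredT xpredT (fun x1 x2 => P (ext (F, (x1, x2))) : nat)) /=.
by rewrite big_bool /= !big_bool.
Qed.

End ExtendedSets.

Section ExtendedDegrees.
Variables (T : finType) (SK : {set {set option T}}) (SKK : {set {set T + bool}}).
Hypothesis covby_SK : forall F G, covby SK (@revincl _) F G =
  [&& F \in SK, G \in SK, G \subset F & #|F :\: G| == 1].
Hypothesis covby_SKK : forall F G, covby SKK (@revincl _) F G =
  [&& F \in SKK, G \in SKK, G \subset F & #|F :\: G| == 1].

Lemma deg_minus_extK F xK : extK F xK \in SK ->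
  deg_minus SK (@revincl _) (extK F xK) =
  #|[set t in F | extK (F :\ t) xK \in SK]| + (xK && (extK F false \in SK)).
Proof.
move=> FS; rewrite (deg_minus_removable covby_SK FS) card_set_option.
congr (_ + _); first by apply: eq_card => t; rewrite !inE setD1_extK.
by case: xK FS => FS; rewrite !inE ?setD1_extK_xK.
Qed.

Lemma deg_plus_extK F xK : extK F xK \in SK ->
  deg_plus SK (@revincl _) (extK F xK) =
  #|[set t | t \notin F & extK (t |: F) xK \in SK]| + (~~ xK && (extK F true \in SK)).
Proof.
move=> FS; rewrite (deg_plus_addable covby_SK FS) card_set_option.
congr (_ + _); first by apply: eq_card => t; rewrite !inE setU1_extK.
by case: xK FS => FS; rewrite !inE ?setU1_extK_xK.
Qed.

Lemma deg_minus_extKK F x1 x2 : extKK F x1 x2 \in SKK ->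
  deg_minus SKK (@revincl _) (extKK F x1 x2) =
  #|[set t in F | extKK (F :\ t) x1 x2 \in SKK]| +
  (x1 && (extKK F false x2 \in SKK)) + (x2 && (extKK F x1 false \in SKK)).
Proof.
move=> FS; rewrite (deg_minus_removable covby_SKK FS) card_set_sumbool.
congr (_ + _ + _); first by apply: eq_card => t; rewrite !inE setD1_extKK.
  by case: x1 FS => FS; rewrite !inE ?setD1_extKK_x1.
by case: x2 FS => FS; rewrite !inE ?setD1_extKK_x2.
Qed.

Lemma deg_plus_extKK F x1 x2 : extKK F x1 x2 \in SKK ->
  deg_plus SKK (@revincl _) (extKK F x1 x2) =
  #|[set t | t \notin F & extKK (t |: F) x1 x2 \in SKK]| +
  (~~ x1 && (extKK F true x2 \in SKK)) + (~~ x2 && (extKK F x1 true \in SKK)).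
Proof.
move=> FS; rewrite (deg_plus_addable covby_SKK FS) card_set_sumbool.
congr (_ + _ + _); first by apply: eq_card => t; rewrite !inE setU1_extKK.
  by case: x1 FS => FS; rewrite !inE ?setU1_extKK_x1.
by case: x2 FS => FS; rewrite !inE ?setU1_extKK_x2.
Qed.

End ExtendedDegrees.

Section Expansion.
Variables (T : finType) (le : rel T).
Hypotheses (le_refl : reflexive le) (le_anti : antisymmetric le) (le_trans : transitive le).
Variables (a b : {set T}).
Hypotheses (aL : a \in filters le) (bL : b \in filters le) (ba : b \subset a).
Hypothesis le_cut : forall z y, z \notin a -> y \in b -> le z y.

Lemma exists_S0_ge z : [exists s in S0 le a, le z s] = (z \notin a).
Proof.
apply/exists_inP/idP => [[s] | za].
  by rewrite inE => /andP[sa _] zs; apply: contra sa => za; apply: filters_up aL za zs.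
have /(exists_maximal_above le_refl le_anti le_trans) :
    z \in [set t | (t \notin a) && le z t].
  by rewrite inE za le_refl.
case=> s []; rewrite inE => /andP[sa _] zs smax; exists s => //.
rewrite inE sa; apply/forall_inP => t /andP[ta st]; apply/eqP; apply: smax => //.
by rewrite inE ta (le_trans zs st).
Qed.

Lemma exists_S1_le y : [exists s in S1 le b, le s y] = (y \in b).
Proof.
apply/exists_inP/idP => [[s] | yb].
  by rewrite inE => /andP[sb _] sy; apply: filters_up bL sb sy.
have ge_refl : reflexive (fun u v => le v u) by [].
have ge_anti : antisymmetric (fun u v => le v u).
  by move=> u v; rewrite andbC; apply: le_anti.
have ge_trans : transitive (fun u v => le v u) by move=> v u w uv vw; apply: le_trans vw uv.
have /(exists_maximal_above ge_refl ge_anti ge_trans) : y \in [set t | (t \in b) && le t y].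
  by rewrite inE yb le_refl.
case=> s []; rewrite inE => /andP[sb _] sy smin; exists s => //.
rewrite inE sb; apply/forall_inP => t /andP[tb ts]; apply/eqP; apply: smin => //.
by rewrite inE tb (le_trans ts sy).
Qed.

Lemma leK_refl : reflexive (leK le a b). Proof. by case. Qed.

Lemma leK_anti : antisymmetric (leK le a b).
Proof.
case=> [z|] [y|] //=; rewrite ?exists_S0_ge ?exists_S1_le; first by move/le_anti->.
  by case/andP=> /negP za /(subsetP ba).
by case/andP=> /(subsetP ba) ya /negP.
Qed.

Lemma leK_trans : transitive (leK le a b).
Proof.
case=> [y|] [x|] [z|] //=; rewrite ?exists_S0_ge ?exists_S1_le.
- exact: le_trans.
- by move=> xy; apply: contra => ya; apply: filters_up aL ya xy.
- by move=> yb; apply: filters_up bL yb.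
- exact: le_cut.
Qed.

Lemma leKK_refl : reflexive (leKK le a b). Proof. by case=> //= -[]. Qed.

Lemma leKK_anti : antisymmetric (leKK le a b).
Proof.
case=> [z|[]] [y|[]] //=; rewrite ?exists_S0_ge ?exists_S1_le; first by move/le_anti->.
- by case/andP=> /negP za /(subsetP ba).
- by case/andP=> /negP za /(subsetP ba).
- by case/andP=> /(subsetP ba) ya /negP.
- by case/andP=> /(subsetP ba) ya /negP.
Qed.

Lemma leKK_trans : transitive (leKK le a b).
Proof.
case=> [y|j] [x|i] [z|k] //=; rewrite ?exists_S0_ge ?exists_S1_le.
- exact: le_trans.
- by move=> xy; apply: contra => ya; apply: filters_up aL ya xy.
- by move=> yb; apply: filters_up bL yb.
- by move=> yb; rewrite (subsetP ba y yb).
- exact: le_cut.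
- by case: i; case: j; case: k.
Qed.

Lemma extK_filters F xK :
  (extK F xK \in filters (leK le a b)) =
  [&& F \in filters le, xK ==> (b \subset F) & ~~ xK ==> (F \subset a)].
Proof.
apply/filtersP/and3P => [ext_up | [FL /implyP bF /implyP Fa]].
  split.
  - by apply/filtersP => t y tF ty; have := ext_up (Some t) (Some y); rewrite !inE; apply.
  - apply/implyP => xK1; apply/subsetP => y yb; have := ext_up None (Some y).
    by rewrite !inE /= exists_S1_le; apply.
  - apply/implyP => xK0; apply/subsetP => t tF; apply: contraLR xK0 => ta; rewrite negbK.
    by have := ext_up (Some t) None; rewrite !inE /= exists_S0_ge; apply.
case=> [t|] [y|]; rewrite !inE /= ?exists_S0_ge ?exists_S1_le.
- exact: filters_up FL.
- by move=> tF; apply: contraR => /Fa /subsetP/(_ t tF).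
- by move=> /bF /subsetP; apply.
- done.
Qed.

Lemma extKK_filters F x1 x2 :
  (extKK F x1 x2 \in filters (leKK le a b)) =
  [&& F \in filters le, x1 ==> x2, x2 ==> (b \subset F) & ~~ x1 ==> (F \subset a)].
Proof.
apply/filtersP/and4P => [ext_up | [FL /implyP x12 /implyP bF /implyP Fa]].
  split.
  - by apply/filtersP => t y tF ty; have := ext_up (inl t) (inl y); rewrite !inE; apply.
  - by apply/implyP => x1T; have := ext_up (inr false) (inr true); rewrite !inE; apply.
  - apply/implyP => x2T; apply/subsetP => y yb; have := ext_up (inr true) (inl y).
    by rewrite !inE /= exists_S1_le; apply.
  - apply/implyP => x1F; apply/subsetP => t tF; apply: contraLR x1F => ta; rewrite negbK.
    by have := ext_up (inl t) (inr false); rewrite !inE /= exists_S0_ge; apply.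
have x1_of t : t \in F -> t \notin a -> x1.
  by move=> tF; apply: contraNT => /Fa/subsetP/(_ t tF).
case=> [t|[]] [y|[]]; rewrite !inE /= ?exists_S0_ge ?exists_S1_le //.
- exact: filters_up FL.
- by move=> tF /(x1_of t tF)/x12.
- exact: x1_of.
- by move=> /bF/subsetP; apply.
- by move=> /x12/bF/subsetP; apply.
- by move=> /x12.
Qed.

Lemma filters_sub_or_sup (F : {set T}) : F \in filters le -> (F \subset a) || (b \subset F).
Proof.
move=> FL; case: (boolP (F \subset a)) => //= /subsetPn[z zF za].
by apply/subsetP => y yb; apply: filters_up FL zF (le_cut za yb).
Qed.

Lemma setD1_sup_filters (F : {set T}) t :
  b \subset F -> ~~ (F \subset a) -> F :\ t \in filters le -> b \subset F :\ t.
Proof.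
move=> bF nFa /filters_sub_or_sup /orP[Fta |] //.
apply/subsetP => y yb; rewrite in_setD1 (subsetP bF y yb) andbT.
apply: contraNneq nFa => yt; apply/subsetP => u uF.
case: (u =P t) => [-> | /eqP ut]; first by rewrite -yt (subsetP ba).
by apply: (subsetP Fta); rewrite in_setD1 ut uF.
Qed.

Local Notation K := (lat_interval (filters le) (@revincl T) a b).

Lemma in_K (F : {set T}) : (F \in K) = [&& F \in filters le, F \subset a & b \subset F].
Proof. by rewrite [LHS]in_set. Qed.

Let covby_L := covby_filters le_refl le_anti le_trans.
Let covby_FK := covby_filters leK_refl leK_anti leK_trans.
Let covby_FKK := covby_filters leKK_refl leKK_anti leKK_trans.

Lemma covby_K (F G : {set T}) :
  covby K (@revincl T) F G = [&& F \in K, G \in K, G \subset F & #|F :\: G| == 1].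
Proof.
rewrite covby_interval; last by move=> G' F' H' GF' HG'; apply: subset_trans HG' GF'.
rewrite covby_L; case FK: (F \in K) => //=; case GK: (G \in K) => //=.
by move: FK GK; rewrite !in_K => /and3P[-> _ _] /and3P[-> _ _].
Qed.

Lemma deg_minus_K (F : {set T}) : F \in K ->
  deg_minus K (@revincl T) F =
  #|[set t in F | (F :\ t \in filters le) && (b \subset F :\ t)]|.
Proof.
move=> FK; move: (FK); rewrite in_K => /and3P[_ Fa _].
rewrite (deg_minus_removable covby_K FK).
by under eq_finset => t do rewrite in_K (subset_trans (subD1set F t) Fa).
Qed.

Lemma deg_plus_K (F : {set T}) : F \in K ->
  deg_plus K (@revincl T) F =
  #|[set t | t \notin F & (t |: F \in filters le) && (t |: F \subset a)]|.
Proof.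
move=> FK; move: (FK); rewrite in_K => /and3P[_ _ bF].
rewrite (deg_plus_addable covby_K FK).
by under eq_finset => t do rewrite in_K (subset_trans bF (subsetUr _ _)) andbT.
Qed.

Lemma extKK_ff_filters (G : {set T}) :
  (extKK G false false \in filters (leKK le a b)) = (extK G false \in filters (leK le a b)).
Proof. by rewrite extKK_filters extK_filters. Qed.

Lemma extKK_tt_filters (G : {set T}) :
  (extKK G true true \in filters (leKK le a b)) = (extK G true \in filters (leK le a b)).
Proof. by rewrite extKK_filters extK_filters /= andbT. Qed.

Lemma extKK_ft_filters (G : {set T}) :
  (extKK G false true \in filters (leKK le a b)) = (G \in K).
Proof. by rewrite extKK_filters in_K /= [(b \subset G) && _]andbC. Qed.

Lemma deg_minus_extK_false (F : {set T}) : F \in filters le -> F \subset a ->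
  deg_minus (filters (leK le a b)) (@revincl _) (extK F false) =
  deg_minus (filters le) (@revincl T) F.
Proof.
move=> FL Fa; have FK : extK F false \in filters (leK le a b) by rewrite extK_filters FL Fa.
rewrite (deg_minus_extK covby_FK FK) (deg_minus_removable covby_L FL) addn0.
by under eq_finset => t do rewrite extK_filters /= (subset_trans (subD1set F t) Fa) andbT.
Qed.

Lemma deg_minus_extK_true (F : {set T}) :
  F \in filters le -> b \subset F -> ~~ (F \subset a) ->
  deg_minus (filters (leK le a b)) (@revincl _) (extK F true) =
  deg_minus (filters le) (@revincl T) F.
Proof.
move=> FL bF nFa.
have FK : extK F true \in filters (leK le a b) by rewrite extK_filters FL bF.
rewrite (deg_minus_extK covby_FK FK) (deg_minus_removable covby_L FL).
rewrite extK_filters /= (negbTE nFa) andbF addn0.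
have removable_sup t := andb_idr (@setD1_sup_filters F t bF nFa).
by under eq_finset => t do rewrite extK_filters /= andbT removable_sup.
Qed.

Lemma deg_minus_extK_true_K (F : {set T}) : F \in K ->
  deg_minus (filters (leK le a b)) (@revincl _) (extK F true) =
  (deg_minus K (@revincl T) F).+1.
Proof.
move=> FK; move: (FK); rewrite in_K => /and3P[FL Fa bF].
have GK : extK F true \in filters (leK le a b) by rewrite extK_filters FL bF.
rewrite (deg_minus_extK covby_FK GK) (deg_minus_K FK) extK_filters FL Fa addn1.
by under eq_finset => t do rewrite extK_filters /= andbT.
Qed.

Lemma deg_extKK_ff (F : {set T}) : F \in filters le -> F \subset a ->
  deg (filters (leKK le a b)) (@revincl _) (extKK F false false) =
  deg (filters (leK le a b)) (@revincl _) (extK F false).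
Proof.
move=> FL Fa.
have GK : extK F false \in filters (leK le a b) by rewrite extK_filters FL Fa.
have GKK : extKK F false false \in filters (leKK le a b) by rewrite extKK_ff_filters.
rewrite /deg (deg_minus_extKK covby_FKK GKK) (deg_plus_extKK covby_FKK GKK).
rewrite (deg_minus_extK covby_FK GK) (deg_plus_extK covby_FK GK) /= !addn0.
congr (_ + _); first by under eq_finset => t do rewrite extKK_ff_filters.
under eq_finset => t do rewrite extKK_ff_filters.
by rewrite !extKK_filters extK_filters FL Fa /= !andbT addn0.
Qed.

Lemma deg_extKK_tt (F : {set T}) : F \in filters le -> b \subset F ->
  deg (filters (leKK le a b)) (@revincl _) (extKK F true true) =
  deg (filters (leK le a b)) (@revincl _) (extK F true).
Proof.
move=> FL bF.
have GK : extK F true \in filters (leK le a b) by rewrite extK_filters FL bF.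
have GKK : extKK F true true \in filters (leKK le a b) by rewrite extKK_tt_filters.
rewrite /deg (deg_minus_extKK covby_FKK GKK) (deg_plus_extKK covby_FKK GKK).
rewrite (deg_minus_extK covby_FK GK) (deg_plus_extK covby_FK GK) /= !addn0.
rewrite (extKK_filters F true false) andbF addn0.
congr (_ + _ + _); first by under eq_finset => t do rewrite extKK_tt_filters.
  by rewrite extKK_filters extK_filters FL bF /=.
by under eq_finset => t do rewrite extKK_tt_filters.
Qed.

Lemma deg_extKK_ft (F : {set T}) : F \in K ->
  deg (filters (leKK le a b)) (@revincl _) (extKK F false true) =
  deg K (@revincl T) F + 2.
Proof.
move=> FK; move: (FK); rewrite in_K => /and3P[FL Fa bF].
have GKK : extKK F false true \in filters (leKK le a b) by rewrite extKK_ft_filters.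
rewrite /deg (deg_minus_extKK covby_FKK GKK) (deg_plus_extKK covby_FKK GKK).
rewrite (deg_minus_K FK) (deg_plus_K FK).
rewrite (extKK_filters F false false) (extKK_filters F true true) FL Fa bF /=.
rewrite !addn0 !addn1 addSn addnS -addn2; congr (_ + _ + _).
  have Fta t : F :\ t \subset a := subset_trans (subD1set F t) Fa.
  by under eq_finset => t do rewrite extKK_filters /= Fta andbT.
have btF t : b \subset t |: F := subset_trans bF (subsetUr _ _).
by under eq_finset => t do rewrite extKK_filters /= btF.
Qed.

Lemma dminus_expansion k :
  dminus (filters (leK le a b)) (@revincl _) k =
  dminus (filters le) (@revincl T) k + dminus K (@revincl T) (k - 1)%R.
Proof.
rewrite /dminus card_pred_extK !card_set_sum -big_split /=; apply: eq_bigr => F _.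
rewrite !extK_filters in_K; case FL: (F \in filters le) => //=.
case Fa: (F \subset a); case bF: (b \subset F) => /=.
- have FK : F \in K by rewrite in_K FL Fa bF.
  by rewrite deg_minus_extK_true_K // deg_minus_extK_false // -addn1 Posz_addn_eq addnC.
- by rewrite deg_minus_extK_false // addn0.
- by rewrite deg_minus_extK_true ?Fa // addn0.
- by have := filters_sub_or_sup FL; rewrite Fa bF.
Qed.

Lemma dtot_expansion k :
  dtot (filters (leKK le a b)) (@revincl _) k =
  dtot (filters (leK le a b)) (@revincl _) k + dtot K (@revincl T) (k - 2)%R.
Proof.
rewrite /dtot card_pred_extKK card_pred_extK !card_set_sum -big_split /=.
apply: eq_bigr => F _; rewrite !extKK_filters !extK_filters in_K.
case FL: (F \in filters le) => //=.
case Fa: (F \subset a); case bF: (b \subset F) => /=.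
- have FK : F \in K by rewrite in_K FL Fa bF.
  rewrite deg_extKK_tt // deg_extKK_ft // deg_extKK_ff // Posz_addn_eq.
  by rewrite addn0 -addnA; congr (_ + _); apply: addnC.
- by rewrite deg_extKK_ff // !addn0.
- by rewrite deg_extKK_tt // !addn0.
- by have := filters_sub_or_sup FL; rewrite Fa bF.
Qed.

End Expansion.

Theorem theorem5 (T : finType) (le : rel T)
    (le_refl : reflexive le) (le_anti : antisymmetric le) (le_trans : transitive le)
    (a b : {set T})
    (hcut : cutting (filters le) (@revincl T) a b) :
  (forall k : int,
      dtot (filters (leKK le a b)) (@revincl _) k =
      (dtot (filters (leK le a b)) (@revincl _) k +
       dtot (lat_interval (filters le) (@revincl T) a b) (@revincl T) (k - 2)%R)%N)
  /\
  (forall k : int,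
      dminus (filters (leK le a b)) (@revincl _) k =
      (dminus (filters le) (@revincl T) k +
       dminus (lat_interval (filters le) (@revincl T) a b) (@revincl T) (k - 1)%R)%N).
Proof.
have [aL bL ba _] := hcut.
have le_cut := cutting_le le_refl le_trans hcut.
split=> k.
- exact: (dtot_expansion le_refl le_anti le_trans aL bL ba le_cut k).
- exact: (dminus_expansion le_refl le_anti le_trans aL bL ba le_cut k).
Qed.
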